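(* Let $A$ be an associative (not necessarily unital) algebra over a field satisfying the identity $x_1\cdots x_n=x_{\sigma(1)}\cdots x_{\sigma(n)}$ for some $\sigma\in S_n$, and write $i=\sigma(1)$, $j=\sigma(n)$, where $i\ne 1$ and $j\ne n$. Then $H_{n+1}$ contains the cycles $(1\,2\,\ldots\,i)$ and $(j+1\,\ldots\,n+1)$, and $H_{n+2}$ contains the transpositions $(1\,2)$ and $(n+1\,\,n+2)$.
   Context: For each $k$, $H_k\subseteq S_k$ is the set of permutations $\tau$ such that $A$ satisfies $x_1\cdots x_k=x_{\tau(1)}\cdots x_{\tau(k)}$ (i.e. $a_1\cdots a_k=a_{\tau(1)}\cdots a_{\tau(k)}$ for all $a_1,\dots,a_k\in A$). *)

From HB Require Import structures.
From mathcomp Require Import all_boot all_order all_algebra all_fingroup.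
Set Implicit Arguments. Unset Strict Implicit. Unset Printing Implicit Defensive.
Import GRing.Theory.
Local Open Scope ring_scope.

(* Product of a word x_1 ... x_k in a (non-unital) multiplication [mul],
   bracketed to the left ((x_1 x_2) x_3)...; the empty word is never used
   for k >= 1 (we return 0 there, irrelevant). *)
Definition wprod {A : Type} (mul : A -> A -> A) (z : A) (s : seq A) : A :=
  match s with [::] => z | x :: s' => foldl mul x s' end.

(* tau \in H_k : the algebra satisfies x_1...x_k = x_{tau(1)}...x_{tau(k)}.
   Indices are 0-based ('I_k = {0,...,k-1}). *)
Definition in_H {K : fieldType} {A : lmodType K} (mul : A -> A -> A)
    (k : nat) (tau : 'S_k) : Prop :=
  forall a : 'I_k -> A,
    wprod mul 0 [seq a i | i <- enum 'I_k] =
    wprod mul 0 [seq a (tau i) | i <- enum 'I_k].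

Definition is_cycle_range (N : nat) (tau : 'S_N) (a b : nat) : Prop :=
  forall k : 'I_N,
    val (tau k) = if (a <= val k < b)%N then (val k).+1
                  else if val k == b then a else val k.

(* Letters are 0-based indices and an identity is a pair of words over them.
   Suppose x_0 ... x_(n-1) = x_(s 0) ... x_(s (n-1)) with s 0 = b.  Substituting
   the product y_0 y_(b+1) for x_b and y_(c+1) for every other x_c turns the
   left-hand side into y_1 ... y_b y_0 y_(b+1) ... y_n, and the right-hand side
   into y_0 times a relabelled instance of the same identity, i.e. into
   y_0 y_1 ... y_n: this is the cycle (0 1 ... b).  The new identity starts with
   the letter 1, so the same step applied to it gives the transposition (0 1).
   At the right end, with j = s (n-1), substituting y_j y_n for x_j and y_c for
   every other x_c gives the inverse of the cycle (j+1 ... n), and repeating the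
   step gives the transposition (n n+1). *)

From HB Require Import structures.
From mathcomp Require Import all_boot all_order all_algebra all_fingroup.
From mathcomp Require Import zify.

Set Implicit Arguments.
Unset Strict Implicit.
Unset Printing Implicit Defensive.

Definition cycle_range (a b k : nat) : nat :=
  if a <= k < b then k.+1 else if k == b then a else k.

Definition cycle_rangeV (a b k : nat) : nat :=
  if a < k <= b then k.-1 else if k == a then b else k.

Section CycleRange.
Variables a b : nat.
Hypothesis le_ab : a <= b.

Lemma cycle_rangeK : cancel (cycle_range a b) (cycle_rangeV a b).
Proof. by move=> k; rewrite /cycle_range /cycle_rangeV; do !case: ifP; lia. Qed.

Lemma cycle_rangeVK : cancel (cycle_rangeV a b) (cycle_range a b).
Proof. by move=> k; rewrite /cycle_range /cycle_rangeV; do !case: ifP; lia. Qed.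

Lemma cycle_range_lt N k : b < N -> k < N -> cycle_range a b k < N.
Proof. by rewrite /cycle_range; do !case: ifP; lia. Qed.

Lemma cycle_range_perm N : b < N ->
  exists rho : 'S_N, forall i, val (rho i) = cycle_range a b (val i).
Proof.
move=> lt_bN; pose f (i : 'I_N) := Ordinal (cycle_range_lt lt_bN (ltn_ord i)).
have f_inj : injective f.
  by move=> i j /(congr1 val) /(can_inj cycle_rangeK) /val_inj.
by exists (perm f_inj) => i; rewrite permE.
Qed.

End CycleRange.

Lemma tperm_cycle_range N (x y : 'I_N) a : val x = a -> val y = a.+1 ->
  forall k, val (tperm x y k) = cycle_range a a.+1 (val k).
Proof.
move=> /= xE yE k; rewrite /cycle_range.
case: tpermP => [->|->|/eqP nkx /eqP nky]; last first.
  have /= : val k != val y by apply: contra_neq nky => /val_inj.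
  have /= : val k != val x by apply: contra_neq nkx => /val_inj.
  by rewrite xE yE; do !case: ifP; lia.
all: by rewrite xE yE; do !case: ifP; lia.
Qed.

Lemma iota0_cat a b : a <= b -> iota 0 b = iota 0 a ++ iota a (b - a).
Proof. by move=> le_ab; rewrite -iotaD subnKC. Qed.

Lemma iota0_rcons n : iota 0 n.+1 = rcons (iota 0 n) n.
Proof. by rewrite -cats1 -addn1 iotaD. Qed.

Lemma iota_split b n : b < n -> iota 0 n = iota 0 b ++ b :: iota b.+1 (n - b.+1).
Proof. by move=> lt_bn; rewrite (iota0_cat lt_bn) iota0_rcons cat_rcons. Qed.

Lemma map_succ_iota m n : map succn (iota m n) = iota m.+1 n.
Proof. by rewrite -add1n iotaDl. Qed.

Lemma map_cycle_range_iota a b N : a <= b -> b < N ->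
  map (cycle_range a b) (iota 0 N) =
  iota 0 a ++ iota a.+1 (b - a) ++ a :: iota b.+1 (N - b.+1).
Proof.
move=> le_ab lt_bN.
rewrite (iota0_cat lt_bN) (iota0_cat (leqW le_ab)) subSn // -addn1 iotaD.
rewrite subnKC // !map_cat -!catA /=.
have cyc_id k : k < a \/ b < k -> cycle_range a b k = k.
  by rewrite /cycle_range; do !case: ifP; lia.
congr (_ ++ _ ++ _ :: _).
- by apply: map_id_in => k; rewrite mem_iota => hk; apply: cyc_id; lia.
- rewrite -map_succ_iota; apply/eq_in_map => k; rewrite mem_iota /cycle_range => hk.
  by do !case: ifP; lia.
- by rewrite /cycle_range ltnn andbF eqxx.
- by apply: map_id_in => k; rewrite mem_iota => hk; apply: cyc_id; lia.
Qed.

Lemma map_cycle_rangeV_iota a b N : a <= b -> b < N ->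
  map (cycle_rangeV a b) (iota 0 N) =
  iota 0 a ++ b :: iota a (b - a) ++ iota b.+1 (N - b.+1).
Proof.
move=> le_ab lt_bN.
rewrite (iota0_cat lt_bN) (iota0_cat (leqW le_ab)) subSn // !map_cat -!catA /=.
have cycV_id k : k < a \/ b < k -> cycle_rangeV a b k = k.
  by rewrite /cycle_rangeV; do !case: ifP; lia.
congr (_ ++ _ :: _ ++ _).
- by apply: map_id_in => k; rewrite mem_iota => hk; apply: cycV_id; lia.
- by rewrite /cycle_rangeV ltnn eqxx.
- rewrite -map_succ_iota -map_comp -[RHS]map_id; apply/eq_in_map => k.
  by rewrite mem_iota /cycle_rangeV /= => hk; do !case: ifP; lia.
- by apply: map_id_in => k; rewrite mem_iota => hk; apply: cycV_id; lia.
Qed.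

Definition subst1 (p : nat) (t : seq nat) (h : nat -> nat) (c : nat) : seq nat :=
  if c == p then t else [:: h c].

Lemma flatten_subst1_notin p t h s :
  p \notin s -> flatten (map (subst1 p t h) s) = map h s.
Proof.
move=> p_notin_s; rewrite -[RHS]flatten_map1; congr flatten; apply/eq_in_map => c c_s.
by rewrite /subst1; case: eqP => // cp; rewrite -cp c_s in p_notin_s.
Qed.

Lemma flatten_subst1 p t h s1 s2 : p \notin s1 -> p \notin s2 ->
  flatten (map (subst1 p t h) (s1 ++ p :: s2)) = map h s1 ++ t ++ map h s2.
Proof.
move=> p_notin_s1 p_notin_s2.
by rewrite map_cat flatten_cat /= {2}/subst1 eqxx !flatten_subst1_notin.
Qed.

Section Words.
Variables (T : Type) (mul : T -> T -> T) (z : T).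
Hypothesis mulA : associative mul.

Local Notation prod := (wprod mul z).

Lemma foldl_mulA x u s : foldl mul (mul x u) s = mul x (foldl mul u s).
Proof. by elim: s x u => //= v s IH x u; rewrite -mulA IH. Qed.

Lemma wprod_cat s t : 0 < size s -> 0 < size t ->
  prod (s ++ t) = mul (prod s) (prod t).
Proof. by case: s t => [|x s] [|y t] //= _ _; rewrite foldl_cat /= foldl_mulA. Qed.

Lemma wprod_cons x s : 0 < size s -> prod (x :: s) = mul x (prod s).
Proof. exact: (@wprod_cat [:: x]). Qed.

Lemma wprod_rcons s x : 0 < size s -> prod (rcons s x) = mul (prod s) x.
Proof. by move=> s_gt0; rewrite -cats1 wprod_cat. Qed.

Lemma wprod_flatten (a : nat -> T) (f : nat -> seq nat) w :
  (forall c, 0 < size (f c)) ->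
  prod (map a (flatten (map f w))) = prod (map (fun c => prod (map a (f c))) w).
Proof.
move=> f_gt0; elim: w => [|c [|c' w] IH] //; first by rewrite /= cats0.
rewrite [flatten _]/= map_cat wprod_cat ?IH ?size_map ?size_cat ?addn_gt0 ?f_gt0 //.
by rewrite [in RHS]map_cons wprod_cons // size_map.
Qed.

Definition word_eq (u v : seq nat) :=
  forall a : nat -> T, prod (map a u) = prod (map a v).

Lemma word_eq_sym u v : word_eq u v -> word_eq v u.
Proof. by move=> huv a; rewrite huv. Qed.

Lemma word_eq_trans u v w : word_eq u v -> word_eq v w -> word_eq u w.
Proof. by move=> huv hvw a; rewrite huv hvw. Qed.

Lemma word_eq_map g u v : word_eq u v -> word_eq (map g u) (map g v).
Proof. by move=> huv a; rewrite -!map_comp huv. Qed.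

Lemma word_eq_flatten f u v : (forall c, 0 < size (f c)) -> word_eq u v ->
  word_eq (flatten (map f u)) (flatten (map f v)).
Proof. by move=> f_gt0 huv a; rewrite !wprod_flatten // huv. Qed.

Lemma word_eq_cons x u v : 0 < size u -> 0 < size v -> word_eq u v ->
  word_eq (x :: u) (x :: v).
Proof.
by move=> u_gt0 v_gt0 huv a; rewrite !map_cons !wprod_cons ?size_map // huv.
Qed.

Lemma word_eq_rcons x u v : 0 < size u -> 0 < size v -> word_eq u v ->
  word_eq (rcons u x) (rcons v x).
Proof.
by move=> u_gt0 v_gt0 huv a; rewrite !map_rcons !wprod_rcons ?size_map // huv.
Qed.

Lemma word_eq_iota_cancel N g g' : cancel g g' ->
  word_eq (iota 0 N) (map g (iota 0 N)) -> word_eq (iota 0 N) (map g' (iota 0 N)).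
Proof.
move=> gK hg; apply: word_eq_sym.
by rewrite -[X in word_eq _ X](mapK gK); apply: word_eq_map.
Qed.

Lemma word_eq_cycle_head n b s : b < n -> b \notin s ->
  word_eq (iota 0 n) (b :: s) ->
  word_eq (iota 0 n.+1) (map (cycle_range 0 b) (iota 0 n.+1)).
Proof.
move=> lt_bn b_notin_s hw.
pose f := subst1 b [:: 0; b.+1] succn.
have f_gt0 c : 0 < size (f c) by rewrite /f /subst1; case: eqP.
have -> : map (cycle_range 0 b) (iota 0 n.+1) = flatten (map f (iota 0 n)).
  rewrite map_cycle_range_iota ?(leqW lt_bn) // (iota_split lt_bn).
  rewrite flatten_subst1 ?mem_iota; try lia.
  by rewrite !map_succ_iota subn0 -subnSK.
apply/word_eq_sym; apply: word_eq_trans (word_eq_flatten f_gt0 hw) _.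
rewrite (@flatten_subst1 _ _ _ [::]) //= -map_succ_iota.
apply: word_eq_cons => //; last exact (word_eq_map succn (word_eq_sym hw)).
by rewrite size_map size_iota; lia.
Qed.

Lemma word_eq_cycle_last n j s : j < n -> j \notin s ->
  word_eq (iota 0 n) (rcons s j) ->
  word_eq (iota 0 n.+1) (map (cycle_rangeV j.+1 n) (iota 0 n.+1)).
Proof.
move=> lt_jn j_notin_s hw.
pose f := subst1 j [:: j; n] id.
have f_gt0 c : 0 < size (f c) by rewrite /f /subst1; case: eqP.
have -> : map (cycle_rangeV j.+1 n) (iota 0 n.+1) = flatten (map f (iota 0 n)).
  rewrite map_cycle_rangeV_iota // (iota_split lt_jn) flatten_subst1 ?mem_iota; try lia.
  by rewrite iota0_rcons subnn cats0 !map_id cat_rcons.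
apply/word_eq_sym; apply: word_eq_trans (word_eq_flatten f_gt0 hw) _.
rewrite -cats1 flatten_subst1 // map_id cats0 -cat_rcons cats1 iota0_rcons.
apply: word_eq_rcons; [by rewrite size_rcons | by rewrite size_iota; lia |].
exact (word_eq_sym hw).
Qed.

Lemma word_eq_transposition_head n b : 0 < b -> b < n ->
  word_eq (iota 0 n.+1) (map (cycle_range 0 b) (iota 0 n.+1)) ->
  word_eq (iota 0 n.+2) (map (cycle_range 0 1) (iota 0 n.+2)).
Proof.
move=> b_gt0 lt_bn hw.
have cyc0 : cycle_range 0 b 0 = 1 by rewrite /cycle_range b_gt0.
have : uniq (map (cycle_range 0 b) (iota 0 n.+1)).
  by rewrite (map_inj_uniq (can_inj (cycle_rangeK (leq0n b)))) iota_uniq.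
rewrite /= cyc0 in hw * => /andP[one_notin _].
have lt_1n : 1 < n.+1 by lia.
exact (word_eq_cycle_head lt_1n one_notin hw).
Qed.

Lemma word_eq_transposition_last m j : j < m ->
  word_eq (iota 0 m.+2) (map (cycle_rangeV j.+1 m.+1) (iota 0 m.+2)) ->
  word_eq (iota 0 m.+3) (map (cycle_rangeV m.+1 m.+2) (iota 0 m.+3)).
Proof.
move=> lt_jm hw.
have cycm : cycle_rangeV j.+1 m.+1 m.+1 = m by rewrite /cycle_rangeV ltnS lt_jm leqnn.
have : uniq (map (cycle_rangeV j.+1 m.+1) (iota 0 m.+2)).
  by rewrite (map_inj_uniq (can_inj (cycle_rangeVK (leqW lt_jm)))) iota_uniq.
rewrite [in map _ _]iota0_rcons map_rcons cycm in hw *.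
rewrite rcons_uniq => /andP[m_notin _].
exact (word_eq_cycle_last (leqW (ltnSn m)) m_notin hw).
Qed.

End Words.

Definition perm_word N (rho : 'S_N) : seq nat := [seq val (rho i) | i <- enum 'I_N].

Lemma perm_word_uniq N (rho : 'S_N) : uniq (perm_word rho).
Proof.
rewrite (map_inj_uniq (f := val \o rho)) ?enum_uniq //.
by move=> i j /val_inj/perm_inj.
Qed.

Lemma perm_word_head n (rho : 'S_n.+1) :
  exists s, perm_word rho = val (rho ord0) :: s.
Proof. by rewrite /perm_word enum_ordSl; eexists. Qed.

Lemma perm_word_last n (rho : 'S_n.+1) :
  exists s, perm_word rho = rcons s (val (rho ord_max)).
Proof. by rewrite /perm_word enum_ordSr map_rcons; eexists. Qed.

Section Identities.
Variables (K : fieldType) (A : lmodType K) (mul : A -> A -> A).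
Hypothesis mulA : associative mul.

Lemma in_H_word N (rho : 'S_N) :
  in_H mul rho <-> word_eq mul 0%R (iota 0 N) (perm_word rho).
Proof.
rewrite /perm_word -val_enum_ord; split=> h a.
  by rewrite -!(map_comp a); exact (h (a \o val)).
pose a' n := oapp a 0%R (insub n).
have a'E (g : 'I_N -> 'I_N) :
    map a' [seq val (g i) | i <- enum 'I_N] = [seq a (g i) | i <- enum 'I_N].
  by rewrite -map_comp; apply: eq_map => i /=; rewrite /a' valK.
by have := h a'; rewrite (a'E id) (a'E rho).
Qed.

Lemma in_H_iota N (rho : 'S_N) f : (forall i, val (rho i) = f (val i)) ->
  in_H mul rho <-> word_eq mul 0%R (iota 0 N) (map f (iota 0 N)).
Proof.
move=> rhoE; rewrite in_H_word /perm_word -val_enum_ord -map_comp.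
by rewrite (eq_map rhoE).
Qed.

Lemma in_H_cycle_head n (rho : 'S_n.+1) : in_H mul rho ->
  word_eq mul 0%R (iota 0 n.+2) (map (cycle_range 0 (val (rho ord0))) (iota 0 n.+2)).
Proof.
move/in_H_word; have [s sE] := perm_word_head rho.
move: (perm_word_uniq rho); rewrite sE => /andP[notin_s _] hw.
exact (word_eq_cycle_head mulA (ltn_ord _) notin_s hw).
Qed.

Lemma in_H_cycle_last n (rho : 'S_n.+1) : in_H mul rho ->
  word_eq mul 0%R (iota 0 n.+2)
    (map (cycle_rangeV (val (rho ord_max)).+1 n.+1) (iota 0 n.+2)).
Proof.
move/in_H_word; have [s sE] := perm_word_last rho.
move: (perm_word_uniq rho); rewrite sE rcons_uniq => /andP[notin_s _] hw.
exact (word_eq_cycle_last mulA (ltn_ord _) notin_s hw).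
Qed.

End Identities.

Local Open Scope ring_scope.

Theorem corollary2p9 (K : fieldType) (A : lmodType K) (mul : A -> A -> A)
    (mulA : forall x y z, mul x (mul y z) = mul (mul x y) z)
    (mulDl : forall (c : K) x y z, mul (c *: x + y) z = c *: mul x z + mul y z)
    (mulDr : forall (c : K) x y z, mul z (c *: x + y) = c *: mul z x + mul z y)
    (m : nat) (sigma : 'S_m.+1)
    (hid : in_H mul sigma)
    (hi : val (sigma ord0) != 0%N)
    (hj : val (sigma ord_max) != m) :
  (exists tau : 'S_m.+2,
      is_cycle_range tau 0 (val (sigma ord0)) /\ in_H mul tau) /\
  (exists tau : 'S_m.+2,
      is_cycle_range tau (val (sigma ord_max)).+1 m.+1 /\ in_H mul tau) /\
  in_H mul (tperm (ord0 : 'I_m.+3) (inord 1)) /\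
  in_H mul (tperm (inord m.+1 : 'I_m.+3) ord_max).
Proof.
have b_gt0 : (0 < val (sigma ord0))%N by rewrite lt0n.
have lt_jm : (val (sigma ord_max) < m)%N by rewrite ltn_neqAle hj -ltnS ltn_ord.
have hL := in_H_cycle_head mulA hid; have hR := in_H_cycle_last mulA hid.
have [t1 t1E] := cycle_range_perm (leq0n _) (leqW (ltn_ord (sigma ord0))).
have [t2 t2E] := cycle_range_perm (leqW lt_jm) (ltnSn m.+1).
have t01E := tperm_cycle_range (erefl : val (ord0 : 'I_m.+3) = 0%N)
  (@inordK m.+2 1 isT).
have tm12E := tperm_cycle_range (@inordK m.+2 m.+1 (leqnSn _))
  (erefl : val ord_max = m.+2).
split; [|split; [|split]].
- by exists t1; split; [exact t1E | exact ((in_H_iota mul t1E).2 hL)].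
- exists t2; split; first exact t2E.
  exact ((in_H_iota mul t2E).2 (word_eq_iota_cancel (cycle_rangeVK (leqW lt_jm)) hR)).
- exact ((in_H_iota mul t01E).2 (word_eq_transposition_head mulA b_gt0 (ltn_ord _) hL)).
- apply (in_H_iota mul tm12E).
  exact (word_eq_iota_cancel (cycle_rangeVK (leqnSn _))
    (word_eq_transposition_last mulA lt_jm hR)).
Qed.
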